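(* Let $\mathcal{H}$ be a real Hilbert space, let $\ell\geq 0$, and let $f\colon \mathcal{H}\to\mathbb{R}$ be a convex and lower semicontinuous function. Then $f$ is $\ell$-Lipschitz if and only if $$\Vert x\Vert-\ell\leq \Vert \operatorname{prox}_f(x+y)-y\Vert \quad \text{for all } x,y\in\mathcal{H}.$$
   Context: For a proper convex lower semicontinuous $f$, $\operatorname{prox}_f(x)=\operatorname{argmin}_{u\in\mathcal{H}}\{f(u)+\tfrac12\Vert x-u\Vert^2\}$ (the minimizer exists and is unique). *)

From HB Require Import structures.
From mathcomp Require Import all_boot all_order all_algebra.
From mathcomp Require Import all_classical all_reals all_analysis.
Set Implicit Arguments. Unset Strict Implicit. Unset Printing Implicit Defensive.
Import Order.TTheory GRing.Theory Num.Theory.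
Import numFieldNormedType.Exports.
Local Open Scope classical_set_scope.
Local Open Scope ring_scope.

(* A real Hilbert space is then a complete normed space (completeNormedModType)
   equipped with such an inner product. *)
Definition inner_product_inducing_norm {R : realType} {V : normedModType R}
    (ip : V -> V -> R) : Prop :=
  [/\ (forall x y, ip x y = ip y x),
      (forall a x y z, ip (a *: x + y) z = a * ip x z + ip y z) &
      (forall x, `|x| ^+ 2 = ip x x)].

(* The proximal point of f at x: the (unique, when f is proper convex lsc on a
   Hilbert space) minimizer of u |-> f u + 1/2 ||x - u||^2, chosen by xget. *)
Definition prox {R : realType} {V : normedModType R} (f : V -> R) (x : V) : V :=
  xget 0 [set p : V | forall u : V,
    f p + 2^-1 * `|x - p| ^+ 2 <= f u + 2^-1 * `|x - u| ^+ 2].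

Definition lipschitz_with {R : realType} {V : normedModType R}
    (l : R) (f : V -> R) : Prop :=
  forall x y : V, `|f x - f y| <= l * `|x - y|.

From HB Require Import structures.
From mathcomp Require Import all_boot all_order all_algebra.
From mathcomp Require Import all_classical all_reals all_analysis.
From mathcomp Require Import ring lra.
Import Order.TTheory GRing.Theory Num.Theory.
Import numFieldNormedType.Exports.
Local Open Scope classical_set_scope.
Local Open Scope ring_scope.

(* The proximal point p = prox f z minimizes f + 1/2 |z - .|^2, so z - p is a
   subgradient of f at p; conversely, if g is a subgradient at q then
   q = prox f (q + g).  An l-Lipschitz f has only subgradients of norm at most l,
   whence |z - prox f z| <= l, and the inequality follows by the triangle
   inequality.  Conversely, x := z - prox f z and y := prox f z give
   |z - prox f z| <= l, so every subgradient has norm at most l.  For a, b and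
   c > 0, the minimizer q of f + c |a - .|^2 has the subgradient 2c (a - q), so
   |a - q| <= l / 2c and f q - f b <= l |q - b|; letting c grow, lower
   semicontinuity at a yields f a - f b <= l |a - b|.  Such minimizers exist
   since minimizing sequences are Cauchy by the parallelogram law and their
   limit minimizes by lower semicontinuity. *)

Lemma ler_from_slack (R : realFieldType) (x y c : R) :
  (forall t, 0 < t -> t <= 1 -> x <= y + t * c) -> x <= y.
Proof.
move=> slack; rewrite leNgt; apply/negP => yx.
have [c_le0|c_gt0] := leP c 0; first by have := slack 1 ltr01 (lexx _); lra.
pose t := Num.min 1 ((x - y) / (2 * c)).
have t_gt0 : 0 < t by rewrite lt_min ltr01 divr_gt0 ?subr_gt0 ?mulr_gt0.
have t_le1 : t <= 1 by rewrite ge_min lexx.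
have tc_le : t * c <= (x - y) / 2.
  rewrite -[(x - y) / 2](_ : (x - y) / (2 * c) * c = _); last by field; rewrite gt_eqF.
  by rewrite ler_pM2r // ge_min lexx orbT.
have := slack t t_gt0 t_le1; lra.
Qed.

Section InnerProduct.
Context {R : realType} {V : normedModType R} {ip : V -> V -> R}.
Hypothesis ip_norm : inner_product_inducing_norm ip.

Lemma ipC x y : ip x y = ip y x.
Proof. by case: ip_norm. Qed.

Lemma ip_linear a x y z : ip (a *: x + y) z = a * ip x z + ip y z.
Proof. by case: ip_norm. Qed.

Lemma ipxx x : ip x x = `|x| ^+ 2.
Proof. by case: ip_norm. Qed.

Lemma ip0l z : ip 0 z = 0.
Proof.
have := ip_linear 1 0 0 z; rewrite scale1r addr0 mul1r.
by move/(congr1 (fun r => r - ip 0 z)); rewrite subrr addrK.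
Qed.

Lemma ipDl x y z : ip (x + y) z = ip x z + ip y z.
Proof. by have := ip_linear 1 x y z; rewrite scale1r mul1r. Qed.

Lemma ipZl a x z : ip (a *: x) z = a * ip x z.
Proof. by have := ip_linear a x 0 z; rewrite addr0 ip0l addr0. Qed.

Lemma ipNl x z : ip (- x) z = - ip x z.
Proof. by rewrite -scaleN1r ipZl mulN1r. Qed.

Lemma ipDr x y z : ip z (x + y) = ip z x + ip z y.
Proof. by rewrite !(ipC z) ipDl. Qed.

Lemma ipZr a x z : ip z (a *: x) = a * ip z x.
Proof. by rewrite !(ipC z) ipZl. Qed.

Lemma ipNr x z : ip z (- x) = - ip z x.
Proof. by rewrite !(ipC z) ipNl. Qed.

Lemma normD_sqr x y : `|x + y| ^+ 2 = `|x| ^+ 2 + 2 * ip x y + `|y| ^+ 2.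
Proof. by rewrite -!ipxx ipDl !ipDr (ipC y x); ring. Qed.

Lemma normB_sqr x y : `|x - y| ^+ 2 = `|x| ^+ 2 - 2 * ip x y + `|y| ^+ 2.
Proof. by rewrite normD_sqr normrN ipNr mulrN. Qed.

Lemma ip_le_norm x y : ip x y <= `|x| * `|y|.
Proof.
have [->|x_neq0] := eqVneq x 0; first by rewrite ip0l normr0 mul0r.
have [->|y_neq0] := eqVneq y 0; first by rewrite ipC ip0l normr0 mulr0.
have xy_gt0 : 0 < `|y| * `|x| by rewrite mulr_gt0 ?normr_gt0.
have := sqr_ge0 (`| `|y| *: x - `|x| *: y|).
rewrite normB_sqr ipZl ipZr !normrZ !normr_id => sq_ge0.
rewrite -(ler_pM2l xy_gt0); nra.
Qed.

Lemma norm_midpoint_sqr (a u v : V) :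
  `|a - (2^-1 *: u + (1 - 2^-1) *: v)| ^+ 2 =
  (`|a - u| ^+ 2 + `|a - v| ^+ 2) / 2 - `|u - v| ^+ 2 / 4.
Proof.
rewrite !normB_sqr -!ipxx !(ipDl, ipDr, ipZl, ipZr) (ipC v u).
by field.
Qed.

End InnerProduct.

Definition moreau_argmin {R : realType} {V : normedModType R}
    (f : V -> R) (c : R) (a q : V) : Prop :=
  forall u, f q + c * `|a - q| ^+ 2 <= f u + c * `|a - u| ^+ 2.

Definition subgradient {R : realType} {V : normedModType R}
    (ip : V -> V -> R) (f : V -> R) (q g : V) : Prop :=
  forall u, f q + ip g (u - q) <= f u.

Section Subgradient.
Context {R : realType} {V : normedModType R} {ip : V -> V -> R} {f : V -> R}.
Hypothesis ip_norm : inner_product_inducing_norm ip.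

Lemma subgradient_moreau_argmin {q g} :
  subgradient ip f q g -> moreau_argmin f 2^-1 (q + g) q.
Proof.
move=> g_sub u; rewrite addrAC subrr add0r.
have -> : q + g - u = g - (u - q) by rewrite opprB addrA (addrC g).
rewrite (normB_sqr ip_norm); have := g_sub u; have := sqr_ge0 `|u - q|; lra.
Qed.

Lemma subgradient_le {q g} u : subgradient ip f q g -> f q - f u <= `|g| * `|q - u|.
Proof.
move=> g_sub; have := ip_le_norm ip_norm g (q - u); have := g_sub u.
rewrite -[u - q]opprB (ipNr ip_norm); lra.
Qed.

Lemma subgradient_norm_le {l q g} :
  0 <= l -> lipschitz_with l f -> subgradient ip f q g -> `|g| <= l.
Proof.
move=> l_ge0 f_lip g_sub.
have := g_sub (q + g); have := f_lip (q + g) q.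
rewrite addrAC subrr add0r (ipxx ip_norm) => lip_g sub_g.
have g_sqr : `|g| ^+ 2 <= l * `|g| by have := ler_norm (f (q + g) - f q); lra.
have [->|g_neq0] := eqVneq g 0; first by rewrite normr0.
have g_gt0 : 0 < `|g| by rewrite normr_gt0.
by rewrite -(ler_pM2r g_gt0) -expr2.
Qed.

End Subgradient.

Lemma lower_semicontinuous_ball {R : realType} {V : normedModType R} {f : V -> R} :
  lower_semicontinuous (fun x => (f x)%:E) ->
  forall x a, a < f x -> exists2 d, 0 < d & forall y, `|x - y| < d -> a < f y.
Proof.
move=> f_lsc x a a_lt; have [W /nbhs_ballP [d d_gt0 dW] Wa] := f_lsc x a a_lt.
by exists d => // y xy; rewrite -lte_fin; apply/Wa/dW; rewrite -ball_normE.
Qed.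

Section Convex.
Context {R : realType} {V : normedModType R} {ip : V -> V -> R} {f : V -> R}.
Hypothesis ip_norm : inner_product_inducing_norm ip.
Hypothesis f_convex : convex_function (E := V) setT f.

Lemma convex_le t (x y : V) : 0 <= t -> t <= 1 ->
  f (t *: x + (1 - t) *: y) <= t * f x + (1 - t) * f y.
Proof.
by move=> t_ge0 t_le1; have := f_convex (Itv01 t_ge0 t_le1) x y; rewrite !in_setT; apply.
Qed.

Lemma convex_lsc_minorant : lower_semicontinuous (fun x => (f x)%:E) ->
  exists a b : R, 0 <= b /\ forall u, a - b * `|u| <= f u.
Proof.
move=> f_lsc; have f0_gt : f 0 - 1 < f 0 by lra.
have [d d_gt0 near0] := lower_semicontinuous_ball f_lsc _ _ f0_gt.
exists (f 0 - 1), (2 / d); split => [|u]; first by rewrite divr_ge0 // ltW.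
have [u_small|u_large] := ltP `|u| d.
  have := near0 u; rewrite sub0r normrN => /(_ u_small).
  have : 0 <= 2 / d * `|u| by rewrite mulr_ge0 // divr_ge0 // ltW.
  lra.
have u_gt0 : 0 < `|u| := lt_le_trans d_gt0 u_large.
pose t := d / (2 * `|u|).
have t_gt0 : 0 < t by rewrite divr_gt0 // mulr_gt0.
have tu : t * `|u| = d / 2 by rewrite /t; field; rewrite gt_eqF.
have t_le1 : t <= 1 by rewrite ler_pdivrMr ?mulr_gt0 // mul1r; lra.
have := convex_le t u 0 (ltW t_gt0) t_le1; rewrite scaler0 addr0 => conv_tu.
have tu_lt : `|0 - t *: u| < d by rewrite sub0r normrN normrZ gtr0_norm // tu; lra.
have f_tu := near0 _ tu_lt; rewrite -(ler_pM2l t_gt0).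
have -> : t * (f 0 - 1 - 2 / d * `|u|) = t * f 0 - t - 1.
  by rewrite mulrBr mulrBr mulrCA tu; field; rewrite gt_eqF.
lra.
Qed.

Lemma moreau_midpoint c (a u v : V) :
  f (2^-1 *: u + (1 - 2^-1) *: v) + c * `|a - (2^-1 *: u + (1 - 2^-1) *: v)| ^+ 2 <=
  (f u + c * `|a - u| ^+ 2 + (f v + c * `|a - v| ^+ 2)) / 2 - c / 4 * `|u - v| ^+ 2.
Proof.
have half_ge0 : (0 : R) <= 2^-1 by rewrite invr_ge0 ler0n.
have half_le1 : (2^-1 : R) <= 1 by rewrite invf_le1 ?ler1n ?ltr0n.
have := convex_le 2^-1 u v half_ge0 half_le1.
rewrite (norm_midpoint_sqr ip_norm) (_ : 1 - 2^-1 = 2^-1 :> R); last by field.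
lra.
Qed.

Lemma moreau_argmin_unique {c a q1 q2} : 0 < c ->
  moreau_argmin f c a q1 -> moreau_argmin f c a q2 -> q1 = q2.
Proof.
move=> c_gt0 q1_min q2_min.
have mid := moreau_midpoint c a q1 q2.
have mid_ge := q1_min (2^-1 *: q1 + (1 - 2^-1) *: q2).
have q1_le := q1_min q2; have q2_le := q2_min q1.
have : c / 4 * `|q1 - q2| ^+ 2 <= 0 by lra.
rewrite pmulr_rle0 ?divr_gt0 // => dist_le0.
by apply/eqP; rewrite -subr_eq0 -normr_eq0 -sqrf_eq0 eq_le dist_le0 sqr_ge0.
Qed.

Lemma moreau_argmin_subgradient {c a q} :
  moreau_argmin f c a q -> subgradient ip f q ((2 * c) *: (a - q)).
Proof.
move=> q_min u; rewrite (ipZl ip_norm).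
apply: (@ler_from_slack _ _ _ (c * `|u - q| ^+ 2)) => t t_gt0 t_le1.
have shift : a - (t *: u + (1 - t) *: q) = (a - q) - t *: (u - q).
  by rewrite scalerBl scale1r scalerBr addrCA opprD addrA.
have := q_min (t *: u + (1 - t) *: q).
rewrite shift (normB_sqr ip_norm (a - q)) (ipZr ip_norm) normrZ gtr0_norm //.
have := convex_le t u q (ltW t_gt0) t_le1.
set I := ip _ _; set U := `|u - q|; move=> conv_t min_t.
have : t * (f q + 2 * c * I - (f u + t * (c * U ^+ 2))) <= 0 by nra.
by rewrite pmulr_rle0 // subr_le0.
Qed.

End Convex.

Lemma lower_semicontinuous_le_cvg {T : topologicalType} {R : realType} {f : T -> R}
    {I : Type} {F : set_system I} {FF : ProperFilter F} {w : I -> T} {q r} :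
  lower_semicontinuous (fun x => (f x)%:E) -> w @ F --> q ->
  (\forall i \near F, f (w i) <= r) -> f q <= r.
Proof.
move=> f_lsc w_q w_le.
have le_closed : closed [set x | f x <= r].
  rewrite (_ : [set x | f x <= r] = ~` [set x | (r%:E < (f x)%:E)%E]).
    by apply: open_closedC; move/lower_semicontinuousP : f_lsc; apply.
  by apply/seteqP; split => x /=; rewrite lte_fin leNgt => /negP.
exact: (closed_cvg _ le_closed w_le _ w_q).
Qed.

Lemma cvg_of_sqr_dist_le {R : realType} {V : completeNormedModType R}
    (w : nat -> V) (K : R) : 0 < K ->
  (forall n k, `|w n - w k| ^+ 2 <= K * (n.+1%:R^-1 + k.+1%:R^-1)) ->
  cvg (w @ \oo).
Proof.
move=> K_gt0 w_dist; apply: cauchy_cvg; apply: cauchy_exP => e e_gt0.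
have E_gt0 : 0 < e ^+ 2 / (2 * K) by rewrite divr_gt0 ?exprn_gt0 ?mulr_gt0.
have [N _ N_small] := near_infty_natSinv_lt (PosNum E_gt0).
exists (w N); exists N => // n /= Nn.
rewrite -ball_normE /ball_ /=.
rewrite -(ltr_pXn2r (_ : 0 < 2)%N) ?nnegrE ?(ltW e_gt0) //.
apply: (le_lt_trans (w_dist N n)).
have -> : e ^+ 2 = K * (e ^+ 2 / (2 * K) + e ^+ 2 / (2 * K)).
  by field; rewrite gt_eqF.
rewrite ltr_pM2l //.
by apply: ltrD; [exact: N_small (leqnn N) | exact: N_small n Nn].
Qed.

Section Prox.
Context {R : realType} {V : completeNormedModType R} {ip : V -> V -> R} {f : V -> R}.
Hypothesis ip_norm : inner_product_inducing_norm ip.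
Hypothesis f_convex : convex_function (E := V) setT f.
Hypothesis f_lsc : lower_semicontinuous (fun x => (f x)%:E).

Lemma moreau_objective_le_cvg {c a} {w : nat -> V} {q r} : w @ \oo --> q ->
  (forall n, f (w n) + c * `|a - w n| ^+ 2 < r + n.+1%:R^-1) ->
  f q + c * `|a - q| ^+ 2 <= r.
Proof.
move=> w_q w_lt; apply/ler_addgt0Pr => e e_gt0.
suff : f q <= r + e - c * `|a - q| ^+ 2 by lra.
have dist_cvg : (fun n => `|a - w n|) @ \oo --> `|a - q|.
  by apply: cvg_norm; apply: cvgB => //; exact: cvg_cst.
have penalty_cvg : (fun n => c * `|a - w n| ^+ 2) @ \oo --> c * `|a - q| ^+ 2.
  apply: cvgM; first exact: cvg_cst.
  by rewrite expr2; under eq_cvg do rewrite expr2; exact: cvgM.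
have near_penalty : \forall n \near \oo, c * `|a - q| ^+ 2 - e / 2 < c * `|a - w n| ^+ 2.
  by apply: cvgr_gt penalty_cvg _ _; lra.
have e2_gt0 : 0 < e / 2 by rewrite divr_gt0.
have near_inv := near_infty_natSinv_lt (PosNum e2_gt0).
apply: (lower_semicontinuous_le_cvg f_lsc w_q).
near=> n.
have : c * `|a - q| ^+ 2 - e / 2 < c * `|a - w n| ^+ 2 by near: n.
have : n.+1%:R^-1 < e / 2 by near: n.
have := w_lt n; move: n.+1%:R^-1 => inv_n; lra.
Unshelve. all: by end_near.
Qed.

Lemma moreau_argmin_exists c a : 0 < c -> exists q, moreau_argmin f c a q.
Proof.
move=> c_gt0; pose F u := f u + c * `|a - u| ^+ 2.
have [a0 [b [b_ge0 minorant]]] := convex_lsc_minorant f_convex f_lsc.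
have F_ge u : a0 - b * `|a| - b ^+ 2 / (4 * c) <= F u.
  have square : - (b ^+ 2 / (4 * c)) <= c * `|a - u| ^+ 2 - b * `|a - u|.
    have := mulr_ge0 (ltW c_gt0) (sqr_ge0 (`|a - u| - b / (2 * c))).
    have -> : c * (`|a - u| - b / (2 * c)) ^+ 2 =
              c * `|a - u| ^+ 2 - b * `|a - u| + b ^+ 2 / (4 * c).
      by field; rewrite gt_eqF.
    lra.
  have u_le : `|u| <= `|a| + `|a - u|.
    by have := ler_normB a (a - u); rewrite opprB addrC subrK.
  have := minorant u; have := ler_wpM2l b_ge0 u_le; rewrite /F; lra.
have F_inf : has_inf (range F).
  by split; [exists (F 0), 0 | exists (a0 - b * `|a| - b ^+ 2 / (4 * c)) => _ [u _ <-]].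
pose m := inf (range F).
have m_le u : m <= F u by apply: (ge_inf F_inf.2); exists u.
have /choice [w w_lt] : forall n : nat, exists u, F u < m + n.+1%:R^-1.
  move=> n; have inv_gt0 : 0 < n.+1%:R^-1 :> R by rewrite invr_gt0 ltr0n.
  by have [_ [u _ <-] Fu] := inf_adherent inv_gt0 F_inf; exists u.
have w_cvg : cvg (w @ \oo).
  apply: (@cvg_of_sqr_dist_le _ _ _ (2 / c)) => [|n k]; first by rewrite divr_gt0.
  rewrite -(ler_pM2l c_gt0) [X in _ <= X]mulrA [X in _ <= X * _](_ : _ = 2);
    last by field; rewrite gt_eqF.
  have := moreau_midpoint ip_norm f_convex c a (w n) (w k).
  have := m_le (2^-1 *: w n + (1 - 2^-1) *: w k).
  have := w_lt n; have := w_lt k; rewrite /F.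
  move: n.+1%:R^-1 k.+1%:R^-1 => inv_n inv_k; lra.
exists (lim (w @ \oo)) => u.
apply: (moreau_objective_le_cvg w_cvg) => n.
have := w_lt n; have := m_le u; rewrite /F; move: n.+1%:R^-1 => inv_n; lra.
Qed.

Lemma prox_moreau_argmin z : moreau_argmin f 2^-1 z (prox f z).
Proof.
apply: xgetPex; have half_gt0 : (0 : R) < 2^-1 by rewrite invr_gt0 ltr0n.
by have [q q_min] := moreau_argmin_exists _ z half_gt0; exists q.
Qed.

Lemma lipschitz_prox_dist_le {l} : 0 <= l -> lipschitz_with l f ->
  forall z, `|z - prox f z| <= l.
Proof.
move=> l_ge0 f_lip z.
have := moreau_argmin_subgradient ip_norm f_convex (prox_moreau_argmin z).
rewrite (_ : 2 * 2^-1 = 1) ?scale1r; last by field.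
move=> g_sub; exact: (subgradient_norm_le ip_norm l_ge0 f_lip g_sub).
Qed.

Lemma prox_dist_le_subgradient_norm {l q g} : (forall z, `|z - prox f z| <= l) ->
  subgradient ip f q g -> `|g| <= l.
Proof.
move=> prox_dist g_sub.
have half_gt0 : (0 : R) < 2^-1 by rewrite invr_gt0 ltr0n.
have prox_qg : prox f (q + g) = q.
  exact: (moreau_argmin_unique ip_norm f_convex half_gt0 (prox_moreau_argmin _)
    (subgradient_moreau_argmin ip_norm g_sub)).
by have := prox_dist (q + g); rewrite prox_qg addrAC subrr add0r.
Qed.

Lemma prox_dist_le_lipschitz {l} : (forall z, `|z - prox f z| <= l) ->
  lipschitz_with l f.
Proof.
move=> prox_dist.
have l_ge0 : 0 <= l := le_trans (normr_ge0 _) (prox_dist 0).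
suff one_sided a b : f a - f b <= l * `|a - b|.
  move=> x y; rewrite ler_norml one_sided andbT.
  by have := one_sided y x; rewrite distrC; lra.
apply/ler_addgt0Pr => e e_gt0.
have f_a_gt : f a - e / 2 < f a by lra.
have [d d_gt0 f_near_a] := lower_semicontinuous_ball f_lsc _ _ f_a_gt.
pose r := Num.min d (e / 2).
have r_gt0 : 0 < r by rewrite lt_min d_gt0 divr_gt0.
(* k = 2c is large enough that k |a - q| <= l forces |a - q| < r and l |a - q| <= r. *)
pose k := (l + 1) ^+ 2 / r.
have k_gt0 : 0 < k by rewrite divr_gt0 // exprn_gt0 // ltr_wpDl.
have k2_gt0 : 0 < k / 2 by rewrite divr_gt0.
have [q q_min] := moreau_argmin_exists _ a k2_gt0.
have g_sub := moreau_argmin_subgradient ip_norm f_convex q_min.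
rewrite (_ : 2 * (k / 2) = k) in g_sub; last by field.
have g_le := prox_dist_le_subgradient_norm prox_dist g_sub.
have dist_aq : (l + 1) ^+ 2 * `|a - q| <= l * r.
  by move: g_le; rewrite normrZ (gtr0_norm k_gt0) /k mulrAC ler_pdivrMr.
have l1_gt0 : 0 < (l + 1) ^+ 2 by rewrite exprn_gt0 // ltr_wpDl.
have r_le_d : r <= d by rewrite ge_min lexx.
have r_le_e : r <= e / 2 by rewrite ge_min lexx orbT.
have aq_lt_d : `|a - q| < d by nra.
have l_aq_le : l * `|a - q| <= e / 2 by nra.
have f_qb : f q - f b <= l * `|q - b|.
  exact: le_trans (subgradient_le ip_norm b g_sub) (ler_wpM2r (normr_ge0 _) g_le).
have qb_le : `|q - b| <= `|a - q| + `|a - b| by rewrite (distrC a) ler_distD.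
have := f_near_a q aq_lt_d; have := ler_wpM2l l_ge0 qb_le; lra.
Qed.

End Prox.

Theorem proposition4 (R : realType) (V : completeNormedModType R)
    (ip : V -> V -> R) (Hip : inner_product_inducing_norm ip)
    (l : R) (hl : 0 <= l) (f : V -> R)
    (fconv : convex_function (E := V) setT f)
    (flsc : lower_semicontinuous (fun x : V => (f x)%:E)) :
  lipschitz_with l f <->
  (forall x y : V, `|x| - l <= `|prox f (x + y) - y|).
Proof.
split => [f_lip x y | prox_ge].
  have := lipschitz_prox_dist_le Hip fconv flsc hl f_lip (x + y).
  have := ler_normD (x + y - prox f (x + y)) (prox f (x + y) - y).
  by rewrite addrA subrK addrK; lra.
apply: (prox_dist_le_lipschitz Hip fconv flsc) => z.
by have := prox_ge (z - prox f z) (prox f z); rewrite subrK subrr normr0; lra.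
Qed.
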